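(* Let $(\mathfrak g,\mathcal F_\bullet\mathfrak g,R)$ be a filtered Rota–Baxter Lie algebra over a field of characteristic zero, let $\mathfrak R$ be the corresponding Rota–Baxter operator $\mathfrak R(x)=\log(\widehat{\mathcal R}(\exp(x)))$ on the group $(\widehat{\mathfrak g},* )$, let $\phi:\mathfrak g\to\mathfrak g$ be an automorphism of the filtered Lie algebra $(\mathfrak g,\mathcal F_\bullet\mathfrak g)$, and let $Q=\phi^{-1}R\phi$. Then $(\mathfrak g,\mathcal F_\bullet\mathfrak g,Q)$ is a filtered Rota–Baxter Lie algebra, and the corresponding Rota–Baxter operator $\mathfrak Q(x)=\log(\widehat{\mathcal Q}(\exp(x)))$ on $(\widehat{\mathfrak g},* )$ satisfies $\mathfrak Q=\widehat\phi^{-1}\mathfrak R\widehat\phi$, where $\widehat\phi$ is the natural extension of $\phi$ to $\widehat{\mathfrak g}$.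
   Context: Filtered Lie algebra: Lie algebra $\mathfrak g$ with subspaces $\mathfrak g=\mathcal F_1\mathfrak g\supset\mathcal F_2\mathfrak g\supset\cdots$, $[\mathcal F_n\mathfrak g,\mathcal F_m\mathfrak g]\subset\mathcal F_{n+m}\mathfrak g$; an automorphism of it is a Lie algebra automorphism $\phi$ with $\phi(\mathcal F_n\mathfrak g)=\mathcal F_n\mathfrak g$ for all $n$. Filtered Rota–Baxter Lie algebra: in addition a linear $R$ with $[R(x),R(y)]=R([R(x),y]+[x,R(y)]+[x,y])$ and $R(\mathcal F_n\mathfrak g)\subset\mathcal F_n\mathfrak g$. For such $R$, let $\mathcal R:U(\mathfrak g)\to U(\mathfrak g)$ be the linear map with $\mathcal R(1)=1$, $\mathcal R(x)=R(x)$, $\mathcal R(xh)=R(x)\mathcal R(h)-\mathcal R([R(x),h])$; it preserves the filtration $\mathcal F_0U=U(\mathfrak g)$, $\mathcal F_nU=\mathrm{span}\{x_1\cdots x_k: x_i\in\mathcal F_{n_i}\mathfrak g,\sum n_i\ge n\}$, and induces $\widehat{\mathcal R}$ on $\widehat U(\mathfrak g)=\varprojlim U(\mathfrak g)/\mathcal F_nU(\mathfrak g)$; $\mathcal Q$, $\widehat{\mathcal Q}$ are defined in the same way from $Q$. $\widehat{\mathfrak g}=\varprojlim\mathfrak g/\mathcal F_{n+1}\mathfrak g\subset\widehat U(\mathfrak g)$; $\exp(x)=\sum x^n/n!$ is a bijection from $\widehat{\mathfrak g}$ onto the group $\mathbb G$ of nonzero group-like elements of $\widehat U(\mathfrak g)$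 with inverse $\log$; $\widehat{\mathcal R}(\mathbb G)\subset\mathbb G$; and $x*y=\log(\exp(x)\exp(y))$. *)

From HB Require Import structures.
From mathcomp Require Import all_boot all_order all_algebra.
Set Implicit Arguments. Unset Strict Implicit. Unset Printing Implicit Defensive.
Import Order.TTheory GRing.Theory Num.Theory.
Local Open Scope ring_scope.

Definition linmap (K : fieldType) (V W : lmodType K) (f : V -> W) : Prop :=
  forall (a : K) (x y : V), f (a *: x + y) = a *: f x + f y.

Definition is_lie_bracket (K : fieldType) (g : lmodType K) (br : g -> g -> g) : Prop :=
  [/\ forall z, linmap (fun x => br x z),
      forall x, linmap (br x),
      forall x, br x x = 0
    & forall x y z, br x (br y z) + br y (br z x) + br z (br x y) = 0].

Definition is_subspace (K : fieldType) (g : lmodType K) (S : pred g) : Prop :=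
  S 0 /\ forall (a : K) x y, S x -> S y -> S (a *: x + y).

(* Filtration g = F_1 g ⊃ F_2 g ⊃ ...  (only the indices n >= 1 are used) *)
Definition is_lie_filtration (K : fieldType) (g : lmodType K) (br : g -> g -> g)
  (F : nat -> pred g) : Prop :=
  [/\ forall x, F 1%N x,
      forall n, (1 <= n)%N -> is_subspace (F n),
      forall n x, (1 <= n)%N -> F n.+1 x -> F n x
    & forall n m x y, (1 <= n)%N -> (1 <= m)%N -> F n x -> F m y -> F (n + m)%N (br x y)].

Definition is_RB (K : fieldType) (g : lmodType K) (br : g -> g -> g) (R : g -> g) : Prop :=
  linmap R /\
  forall x y, br (R x) (R y) = R (br (R x) y + br x (R y) + br x y).

Definition filtered_RB (K : fieldType) (g : lmodType K) (br : g -> g -> g)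
  (F : nat -> pred g) (R : g -> g) : Prop :=
  is_RB br R /\ forall n x, (1 <= n)%N -> F n x -> F n (R x).

Definition filtered_lie_aut (K : fieldType) (g : lmodType K) (br : g -> g -> g)
  (F : nat -> pred g) (phi phi_inv : g -> g) : Prop :=
  [/\ linmap phi, forall x y, phi (br x y) = br (phi x) (phi y),
      cancel phi phi_inv, cancel phi_inv phi
    & forall n x, (1 <= n)%N -> (F n (phi x) <-> F n x)].

Definition lie_map (K : fieldType) (g : lmodType K) (br : g -> g -> g)
  (A : algType K) (f : g -> A) : Prop :=
  linmap f /\ forall x y, f (br x y) = f x * f y - f y * f x.

Definition alg_morph (K : fieldType) (A B : algType K) (h : A -> B) : Prop :=
  [/\ linmap h, h 1 = 1 & forall u v, h (u * v) = h u * h v].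

Definition is_UEA (K : fieldType) (g : lmodType K) (br : g -> g -> g)
  (U : algType K) (iota : g -> U) : Prop :=
  lie_map br iota /\
  forall (A : algType K) (f : g -> A), lie_map br f ->
    (exists h : U -> A, alg_morph h /\ forall x, h (iota x) = f x) /\
    (forall h1 h2 : U -> A, alg_morph h1 -> alg_morph h2 ->
       (forall x, h1 (iota x) = f x) -> (forall x, h2 (iota x) = f x) ->
       forall u, h1 u = h2 u).

(* F_n U = span{ x_1 ... x_k : x_i in F_{n_i} g, n_i >= 1, sum n_i >= n } *)
Definition FU (K : fieldType) (g : lmodType K) (U : algType K) (iota : g -> U)
  (F : nat -> pred g) (n : nat) (u : U) : Prop :=
  exists s : seq (K * seq (nat * g)),
    (forall p, p \in s ->
       (forall q, q \in p.2 -> (1 <= q.1)%N /\ F q.1 q.2) /\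
       (n <= \sum_(q <- p.2) q.1)%N) /\
    u = \sum_(p <- s) p.1 *: \prod_(q <- p.2) iota q.2.

Definition RB_lift (K : fieldType) (g : lmodType K) (U : algType K) (iota : g -> U)
  (R : g -> g) (calR : U -> U) : Prop :=
  [/\ linmap calR, calR 1 = 1
    & forall (x : g) (h : U),
        calR (iota x * h) =
        iota (R x) * calR h - calR (iota (R x) * h - h * iota (R x))].

(* An element of \hat U = lim U / F_n U is represented by a compatible
   sequence of representatives u_n (class in U / F_n U). *)
Definition hatU_elt (K : fieldType) (g : lmodType K) (U : algType K) (iota : g -> U)
  (F : nat -> pred g) (u : nat -> U) : Prop :=
  forall n, FU iota F n (u n.+1 - u n).

Definition hatU_eq (K : fieldType) (g : lmodType K) (U : algType K) (iota : g -> U)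
  (F : nat -> pred g) (u v : nat -> U) : Prop :=
  forall n, FU iota F n (u n - v n).

(* An element of \hat g = lim g / F_{n+1} g : compatible sequence x_n (class mod F_{n+1} g) *)
Definition hatg_elt (K : fieldType) (g : lmodType K) (F : nat -> pred g) (x : nat -> g) : Prop :=
  forall n, F n.+2 (x n.+1 - x n).

(* exp and log, computed at level n (modulo F_n U); higher terms vanish mod F_n U *)
Definition expU (K : fieldType) (U : algType K) (n : nat) (u : U) : U :=
  \sum_(k < n.+1) (k`!%:R : K)^-1 *: u ^+ k.

Definition logU (K : fieldType) (U : algType K) (n : nat) (y : U) : U :=
  \sum_(1 <= k < n.+1) ((-1) ^+ k.+1 / (k%:R : K)) *: (y - 1) ^+ k.

Definition frakR (K : fieldType) (g : lmodType K) (U : algType K) (iota : g -> U)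
  (calR : U -> U) (x : nat -> g) : nat -> U :=
  fun n => logU n (calR (expU n (iota (x n)))).

(* level-wise extension of a map to sequences (used for \hat phi on \hat g
   and for the extension of an algebra map of U to \hat U) *)
Definition hatmap (A B : Type) (f : A -> B) (x : nat -> A) : nat -> B := fun n => f (x n).

(* Conjugating R by phi transports everything: the lift of phi to an algebra
   automorphism Phi of U(g) intertwines the recursions defining the lifts of R and
   of Q = phi^-1 R phi, so Phi^-1 calR Phi is a lift of Q.  The recursion
   determines the lift on the span of words of a fixed length (the commutator
   with an element of g preserves word length), in particular on the powers of
   iota(y) occurring in exp.  Since algebra morphisms commute with the truncated
   exp and log, Q's operator equals Phi^-1 frakR Phi at every level. *)

From HB Require Import structures.
From mathcomp Require Import all_boot all_order all_algebra.
Import Order.TTheory GRing.Theory Num.Theory.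
Local Open Scope ring_scope.
Set Implicit Arguments. Unset Strict Implicit.

Section LinearMaps.
Variables (K : fieldType) (V W : lmodType K) (f : V -> W) (Hf : linmap f).

Lemma linmap0 : f 0 = 0.
Proof.
have := Hf 1 0 0; rewrite !scale1r addr0 => /(congr1 (fun z => z - f 0)).
by rewrite subrr addrK.
Qed.

Lemma linmapD x y : f (x + y) = f x + f y.
Proof. by have := Hf 1 x y; rewrite !scale1r. Qed.

Lemma linmapZ a x : f (a *: x) = a *: f x.
Proof. by have := Hf a x 0; rewrite !addr0 linmap0 addr0. Qed.

Lemma linmapB x y : f (x - y) = f x - f y.
Proof. by rewrite linmapD -scaleN1r linmapZ scaleN1r. Qed.

Lemma linmap_sum (I : Type) (r : seq I) (P : pred I) (G : I -> V) :
  f (\sum_(i <- r | P i) G i) = \sum_(i <- r | P i) f (G i).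
Proof. exact: (big_morph f linmapD linmap0). Qed.

Lemma linmap_can (f' : W -> V) : cancel f f' -> cancel f' f -> linmap f'.
Proof. by move=> fK f'K a x y; apply: (can_inj fK); rewrite f'K Hf !f'K. Qed.

End LinearMaps.

Lemma linmap_comp (K : fieldType) (U V W : lmodType K) (f : V -> W) (h : U -> V) :
  linmap f -> linmap h -> linmap (f \o h).
Proof. by move=> Hf Hh a x y /=; rewrite Hh Hf. Qed.

Section AlgebraMorphisms.
Variables (K : fieldType) (A B : algType K) (h : A -> B) (Hh : alg_morph h).

Lemma alg_morphX u k : h (u ^+ k) = h u ^+ k.
Proof.
case: Hh => _ h1 hM; elim: k => [|k IHk]; first by rewrite !expr0.
by rewrite !exprS hM IHk.
Qed.

Lemma alg_morph_expU n u : h (expU n u) = expU n (h u).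
Proof.
case: (Hh) => hlin _ _; rewrite /expU linmap_sum //.
by apply: eq_bigr => k _; rewrite linmapZ // alg_morphX.
Qed.

Lemma alg_morph_logU n u : h (logU n u) = logU n (h u).
Proof.
case: (Hh) => hlin h1 _; rewrite /logU linmap_sum //.
by apply: eq_bigr => k _; rewrite linmapZ // alg_morphX linmapB // h1.
Qed.

End AlgebraMorphisms.

Section ConjugateRotaBaxter.
Variables (K : fieldType) (g : lmodType K) (br : g -> g -> g) (F : nat -> pred g).
Variables (phi phi_inv : g -> g) (Hphi : filtered_lie_aut br F phi phi_inv).

Lemma filtered_RB_conj R : filtered_RB br F R -> filtered_RB br F (phi_inv \o R \o phi).
Proof.
case: Hphi => phi_lin phi_br phiK phi_invK phiF [[R_lin R_RB] RF].
have phi_inv_lin : linmap phi_inv by apply: linmap_can phi_invK.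
split; last first.
  move=> n x n_gt0 Fx /=; apply/(phiF n _ n_gt0); rewrite phi_invK.
  by apply: RF => //; apply/phiF.
split; first by do 2!apply: linmap_comp.
move=> x y /=; apply: (can_inj phiK).
by rewrite phi_invK phi_br !phi_invK R_RB !(linmapD phi_lin) !phi_br !phi_invK.
Qed.

Variables (U : algType K) (iota : g -> U) (Phi Phi_inv : U -> U).
Hypotheses (HPhi : alg_morph Phi) (HPhi_inv : alg_morph Phi_inv).
Hypotheses (Phi_iota : forall x, Phi (iota x) = iota (phi x))
           (Phi_inv_iota : forall x, Phi_inv (iota x) = iota (phi_inv x)).

Lemma RB_lift_conj R calR : RB_lift iota R calR ->
  RB_lift iota (phi_inv \o R \o phi) (Phi_inv \o calR \o Phi).
Proof.
case: Hphi => _ _ _ phi_invK _; case: HPhi => Phi_lin Phi1 PhiM.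
case: HPhi_inv => Phi_inv_lin Phi_inv1 Phi_invM [calR_lin calR1 calR_rec].
split => [||x u /=]; first by do 2!apply: linmap_comp.
  by rewrite /= Phi1 calR1 Phi_inv1.
rewrite PhiM Phi_iota calR_rec (linmapB Phi_inv_lin) Phi_invM Phi_inv_iota.
by rewrite (linmapB Phi_lin) !PhiM Phi_iota phi_invK.
Qed.

End ConjugateRotaBaxter.

Section UniqueLift.
Variables (K : fieldType) (g : lmodType K) (br : g -> g -> g).
Variables (U : algType K) (iota : g -> U) (Hiota : lie_map br iota).

Inductive word_span (k : nat) : U -> Prop :=
  | word_span0 : word_span k 0
  | word_span_comb a u v : word_span k u -> word_span k v -> word_span k (a *: u + v)
  | word_span_word (xs : seq g) : size xs = k -> word_span k (\prod_(x <- xs) iota x).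

Lemma word_span_mull k x u : word_span k u -> word_span k.+1 (iota x * u).
Proof.
elim=> [|a u1 u2 _ IH1 _ IH2|xs xs_k].
- by rewrite mulr0; apply: word_span0.
- by rewrite mulrDr -scalerAr; apply: word_span_comb.
- by have := @word_span_word k.+1 (x :: xs); rewrite big_cons /= xs_k; apply.
Qed.

Lemma word_span_pow k y : word_span k (iota y ^+ k).
Proof. by rewrite -iter_mulr_1 -big_nseq; apply: word_span_word; rewrite size_nseq. Qed.

Definition ad (a : g) (u : U) : U := iota a * u - u * iota a.

Lemma ad_comb a c u v : ad a (c *: u + v) = c *: ad a u + ad a v.
Proof. by rewrite /ad mulrDr mulrDl -scalerAr -scalerAl scalerBr opprD addrACA. Qed.

Lemma ad_mull a x u : ad a (iota x * u) = iota (br a x) * u + iota x * ad a u.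
Proof. by case: Hiota => _ iota_br; rewrite iota_br /ad mulrBl mulrBr !mulrA addrA subrK. Qed.

Lemma ad_word a xs : word_span (size xs) (ad a (\prod_(x <- xs) iota x)).
Proof.
elim: xs => [|x xs IHxs]; first by rewrite big_nil /ad mulr1 mul1r subrr; apply: word_span0.
rewrite big_cons ad_mull -[X in X + _]scale1r; apply: word_span_comb.
  by have := @word_span_word (size xs).+1 (br a x :: xs); rewrite big_cons; apply.
exact: word_span_mull.
Qed.

Lemma word_span_ad k a u : word_span k u -> word_span k (ad a u).
Proof.
elim=> [|c u1 u2 _ IH1 _ IH2|xs <-]; last exact: ad_word.
  by rewrite /ad mulr0 mul0r subrr; apply: word_span0.
by rewrite ad_comb; apply: word_span_comb.
Qed.

Lemma linmap_eq_word_span (V : lmodType K) (f1 f2 : U -> V) k u :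
  linmap f1 -> linmap f2 ->
  (forall xs, size xs = k -> f1 (\prod_(x <- xs) iota x) = f2 (\prod_(x <- xs) iota x)) ->
  word_span k u -> f1 u = f2 u.
Proof.
move=> lin1 lin2 eq_words; elim=> [|a u1 u2 _ IH1 _ IH2|]; last exact: eq_words.
  by rewrite (linmap0 lin1) (linmap0 lin2).
by rewrite lin1 lin2 IH1 IH2.
Qed.

Variables (Q : g -> g) (calQ1 calQ2 : U -> U).
Hypotheses (HQ1 : RB_lift iota Q calQ1) (HQ2 : RB_lift iota Q calQ2).

Lemma RB_lift_eq_word_span k u : word_span k u -> calQ1 u = calQ2 u.
Proof.
case: HQ1 HQ2 => lin1 one1 rec1 [lin2 one2 rec2].
apply: (linmap_eq_word_span lin1 lin2); elim: k => [|k IHk] [|x xs] //= => [_|[xs_k]].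
  by rewrite big_nil one1 one2.
have xs_span : word_span k (\prod_(y <- xs) iota y) by apply: word_span_word.
have eq_k := linmap_eq_word_span lin1 lin2 IHk.
by rewrite big_cons rec1 rec2 (eq_k _ xs_span) (eq_k _ (word_span_ad (Q x) xs_span)).
Qed.

Lemma RB_lift_eq_expU n y : calQ1 (expU n (iota y)) = calQ2 (expU n (iota y)).
Proof.
case: HQ1 HQ2 => lin1 _ _ [lin2 _ _].
rewrite /expU (linmap_sum lin1) (linmap_sum lin2); apply: eq_bigr => k _.
by rewrite (linmapZ lin1) (linmapZ lin2) (RB_lift_eq_word_span (word_span_pow k y)).
Qed.

End UniqueLift.

Lemma hatU_eq_pointwise (K : fieldType) (g : lmodType K) (U : algType K) (iota : g -> U)
  (F : nat -> pred g) (u v : nat -> U) : u =1 v -> hatU_eq iota F u v.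
Proof. by move=> uv n; exists [::]; rewrite uv subrr big_nil. Qed.

Theorem proposition4p18
  (K : fieldType) (Kchar0 : [pchar K] =i pred0)
  (g : lmodType K) (br : g -> g -> g) (F : nat -> pred g) (R : g -> g)
  (Hlie : is_lie_bracket br) (HF : is_lie_filtration br F)
  (HR : filtered_RB br F R)
  (U : algType K) (iota : g -> U) (HU : is_UEA br iota)
  (calR : U -> U) (HcalR : RB_lift iota R calR)
  (phi phi_inv : g -> g) (Hphi : filtered_lie_aut br F phi phi_inv)
  (Phi_inv : U -> U) (HPhi_inv : alg_morph Phi_inv)
  (HPhi_inv_ext : forall x, Phi_inv (iota x) = iota (phi_inv x)) :
  let Q := fun x => phi_inv (R (phi x)) in
  filtered_RB br F Q /\
  (exists calQ : U -> U, RB_lift iota Q calQ) /\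
  (forall calQ : U -> U, RB_lift iota Q calQ ->
     forall x : nat -> g, hatg_elt F x ->
       hatU_eq iota F (frakR iota calQ x)
                      (hatmap Phi_inv (frakR iota calR (hatmap phi x)))).
Proof.
move=> Q; case: HU => iota_lie iota_univ.
have phi_lie : lie_map br (iota \o phi).
  case: Hphi iota_lie => phi_lin phi_br _ _ _ [iota_lin iota_br].
  by split=> [|x y /=]; [apply: linmap_comp | rewrite phi_br iota_br].
have [[Phi [HPhi Phi_iota]] _] := iota_univ U _ phi_lie.
have HcalQ0 := RB_lift_conj Hphi HPhi HPhi_inv Phi_iota HPhi_inv_ext HcalR.
split; first exact: (filtered_RB_conj Hphi HR).
split; first by exists (Phi_inv \o calR \o Phi).
move=> calQ HcalQ x _; apply: hatU_eq_pointwise => n.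
rewrite /frakR /hatmap (RB_lift_eq_expU iota_lie HcalQ HcalQ0) /=.
by rewrite (alg_morph_expU HPhi) Phi_iota (alg_morph_logU HPhi_inv).
Qed.
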